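(* Suppose $\rho^w$ and $\rho^b$ are convex risk measures. Then an equal risk price with commitment exists if and only if the fair price interval \[[-\varrho^b(0,\tau_0),\ \varrho^w(0,\tau_0)],\] where $\tau_0\in\arg\min_\tau\varrho^b(0,\tau)$, is bounded. Moreover, when it exists, the equal risk price with commitment equals the center of this interval, $p_0^*=(\varrho^w(0,\tau_0)-\varrho^b(0,\tau_0))/2$.
   Context: Discrete-time setting: filtered probability space $(\Omega,\mathcal{F},(\mathcal{F}_t),\mathbb{P})$, zero interest rate, risky asset with $S_k:=S_{t_k}$ at trading dates $t_0<\dots<t_{K-1}<t_K=T$, $\Delta S_{k+1}=S_{k+1}-S_k$, adapted auxiliary process $Y_k$. Exercise times are stopping times $\tau:\Omega\to\{0,\dots,K\}$ ($\{\tau=k\}\in\mathcal{F}_{t_k}$), payoff $F(S_\tau,Y_\tau)=\sum_k\mathbf{1}\{\tau=k\}F_k(S_k,Y_k)$. $\bar{\mathcal{X}}_\tau(p_0)$: wealth processes with $X^\tau_0=p_0$, $X^\tau_{k+1}(\tau)=X^\tau_k(\tau)+(\xi_k\mathbf{1}\{\tau>k\}+\sum_{i=0}^k\hat\xi^i_k\mathbf{1}\{\tau=i\})\Delta S_{k+1}$ for every $\tau$, with $\xi_k,\hat\xi^i_k$ $\mathcal{F}_{t_k}$-measurable. A convex risk measure is monotone, translation invariant ($\rho(X+m)=\rho(X)+m$), normalized and convex. Define $\varrho^w(p_0,\tau)=\inf_{X^\tau\in\bar{\mathcal{X}}_\tau(p_0)}\rho^w(F(S_\tau,Y_\tau)-X^\tau_K(\tau))$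 and $\varrho^b(p_0,\tau)=\inf_{X^\tau\in\bar{\mathcal{X}}_\tau(-p_0)}\rho^b(-F(S_\tau,Y_\tau)-X^\tau_K(\tau))$. The equal risk price with commitment is the unique $p_0^*$ for which there exists $\tau^*$ with $\varrho^w(p_0^*,\tau^* )=\varrho^b(p_0^*,\tau^* )\in\mathbb{R}$ and $\tau^*\in\arg\min_\tau\varrho^b(p_0^*,\tau)$. *)

From HB Require Import structures.
From mathcomp Require Import all_boot all_order all_algebra.
From mathcomp Require Import all_classical all_reals all_analysis.
Set Implicit Arguments. Unset Strict Implicit. Unset Printing Implicit Defensive.
Import Order.TTheory GRing.Theory Num.Theory.
Local Open Scope classical_set_scope.
Local Open Scope ring_scope.

Section Defs.
Context {d : measure_display} {Omega : measurableType d} {R : realType}.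

Definition Gmeasurable {dT} {T : measurableType dT}
  (G : set (set Omega)) (f : Omega -> T) : Prop :=
  forall B : set T, measurable B -> G (f @^-1` B).

(* (G k)_{k} is the filtration (F_{t_k})_k, k = 0..K *)
Definition is_filtration (K : nat) (G : nat -> set (set Omega)) : Prop :=
  [/\ forall k, sigma_algebra setT (G k),
      forall k, G k `<=` measurable &
      forall k l, (k <= l)%N -> G k `<=` G l].

Definition adapted {dT} {T : measurableType dT} (K : nat)
  (G : nat -> set (set Omega)) (X : nat -> Omega -> T) : Prop :=
  forall k, (k <= K)%N -> Gmeasurable (G k) (X k).

Definition stopping_time (K : nat) (G : nat -> set (set Omega))
  (tau : Omega -> nat) : Prop :=
  (forall w, (tau w <= K)%N) /\
  (forall k, (k <= K)%N -> G k [set w | tau w = k]).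

Definition convex_risk_measure (rho : (Omega -> R) -> \bar R) : Prop :=
  [/\ (forall X Y : Omega -> R, (forall w, X w <= Y w) -> (rho X <= rho Y)%E),
      (forall (X : Omega -> R) (m : R),
          rho (fun w => (X w + m)%R) = (rho X + m%:E)%E),
      rho (fun _ => 0) = 0%E &
      (forall (X Y : Omega -> R) (l : R), 0 <= l <= 1 ->
         (rho (fun w => (l * X w + (1 - l) * Y w)%R)
          <= l%:E * rho X + (1 - l)%:E * rho Y)%E)].

(* payoff F(S_tau, Y_tau) = sum_k 1{tau = k} F_k(S_k, Y_k) *)
Definition payoff {dY} {TY : measurableType dY}
  (F : nat -> R -> TY -> R) (S : nat -> Omega -> R) (Y : nat -> Omega -> TY)
  (tau : Omega -> nat) : Omega -> R :=
  fun w => F (tau w) (S (tau w) w) (Y (tau w) w).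

(* wealth process X^tau_k(tau) generated by strategies xi_k and
   xih i k (= \hat xi^i_k), started at p0 *)
Fixpoint wealth (S : nat -> Omega -> R) (xi : nat -> Omega -> R)
  (xih : nat -> nat -> Omega -> R) (p0 : R) (tau : Omega -> nat) (k : nat)
  : Omega -> R :=
  match k with
  | 0 => fun _ => p0
  | k'.+1 => fun w =>
      wealth S xi xih p0 tau k' w +
      (xi k' w * (k' < tau w)%N%:R +
       \sum_(i < k'.+1) xih i k' w * (tau w == i)%:R) * (S k'.+1 w - S k' w)
  end.

Definition admissible (G : nat -> set (set Omega)) (xi : nat -> Omega -> R)
  (xih : nat -> nat -> Omega -> R) : Prop :=
  (forall k, Gmeasurable (G k) (xi k)) /\
  (forall i k, (i <= k)%N -> Gmeasurable (G k) (xih i k)).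

Definition rho_writer {dY} {TY : measurableType dY} (K : nat)
  (G : nat -> set (set Omega)) (S : nat -> Omega -> R) (Y : nat -> Omega -> TY)
  (F : nat -> R -> TY -> R) (rhow : (Omega -> R) -> \bar R)
  (p0 : R) (tau : Omega -> nat) : \bar R :=
  ereal_inf [set r | exists xi xih, admissible G xi xih /\
    r = rhow (fun w => payoff F S Y tau w - wealth S xi xih p0 tau K w)].

Definition rho_buyer {dY} {TY : measurableType dY} (K : nat)
  (G : nat -> set (set Omega)) (S : nat -> Omega -> R) (Y : nat -> Omega -> TY)
  (F : nat -> R -> TY -> R) (rhob : (Omega -> R) -> \bar R)
  (p0 : R) (tau : Omega -> nat) : \bar R :=
  ereal_inf [set r | exists xi xih, admissible G xi xih /\
    r = rhob (fun w => - payoff F S Y tau w - wealth S xi xih (- p0) tau K w)].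

Definition ERP_commitment_with {dY} {TY : measurableType dY} (K : nat)
  (G : nat -> set (set Omega)) (S : nat -> Omega -> R) (Y : nat -> Omega -> TY)
  (F : nat -> R -> TY -> R) (rhow rhob : (Omega -> R) -> \bar R)
  (p0 : R) (tau : Omega -> nat) : Prop :=
  [/\ stopping_time K G tau,
      rho_writer K G S Y F rhow p0 tau = rho_buyer K G S Y F rhob p0 tau,
      rho_writer K G S Y F rhow p0 tau \is a fin_num &
      forall tau', stopping_time K G tau' ->
        (rho_buyer K G S Y F rhob p0 tau <= rho_buyer K G S Y F rhob p0 tau')%E].

End Defs.

From HB Require Import structures.
From mathcomp Require Import all_boot all_order all_algebra.
From mathcomp Require Import all_classical all_reals all_analysis.
From mathcomp Require Import ring lra.
Import Order.TTheory GRing.Theory Num.Theory.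
Local Open Scope classical_set_scope.
Local Open Scope ring_scope.

(* By translation invariance, hedging from initial capital p0 shifts both risks
   by p0: varrho^w(p0, tau) = varrho^w(0, tau) - p0 and
   varrho^b(p0, tau) = varrho^b(0, tau) + p0.  Hence the buyer's optimal
   exercise times do not depend on p0, and the equation
   varrho^w(p0, tau) = varrho^b(p0, tau) is linear in p0: it has a real
   solution iff both risks at p0 = 0 are finite, namely the midpoint
   (varrho^w(0, tau) - varrho^b(0, tau)) / 2 of the fair price interval. *)

Lemma ereal_infDr (R : realType) (A : set (\bar R)) (c : R) :
  ereal_inf [set (x + c%:E)%E | x in A] = (ereal_inf A + c%:E)%E.
Proof.
apply/eqP; rewrite eq_le; apply/andP; split.
- rewrite -(leeD2rE (x := (- c)%:E)) // EFinN addeK //.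
  apply: le_ereal_inf_tmp => x Ax.
  have inf_le : (ereal_inf [set (x + c%:E)%E | x in A] <= x + c%:E)%E.
    by apply: ereal_inf_lbound; exists x.
  by have := leeD2r (- c)%:E inf_le; rewrite EFinN addeK.
- apply: le_ereal_inf_tmp => _ [x Ax <-].
  by rewrite leeD2r //; apply: ereal_inf_lbound.
Qed.

Section TranslationInvariance.
Context {d : measure_display} {Omega : measurableType d} {R : realType}.

Definition translation_invariant (rho : (Omega -> R) -> \bar R) : Prop :=
  forall (X : Omega -> R) (m : R), rho (fun w => X w + m) = (rho X + m%:E)%E.

Lemma convex_risk_measure_translation_invariant rho :
  convex_risk_measure rho -> translation_invariant rho.
Proof. by case. Qed.

Lemma ereal_inf_translate {rho : (Omega -> R) -> \bar R} {I J : Type}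
    (P : I -> J -> Prop) (Z Zc : I -> J -> Omega -> R) (c : R) :
  translation_invariant rho -> (forall i j w, Zc i j w = Z i j w + c) ->
  ereal_inf [set r | exists i j, P i j /\ r = rho (Zc i j)] =
  (ereal_inf [set r | exists i j, P i j /\ r = rho (Z i j)] + c%:E)%E.
Proof.
move=> rho_tr ZcE; rewrite -ereal_infDr; congr ereal_inf.
have rhoZc i j : rho (Zc i j) = (rho (Z i j) + c%:E)%E.
  by rewrite -rho_tr; congr rho; apply/funext => w; rewrite ZcE.
apply/seteqP; split => r /=.
- by move=> [i [j [Pij ->]]]; rewrite rhoZc; exists (rho (Z i j)) => //; exists i, j.
- by move=> [_ [i [j [Pij ->]]] <-]; exists i, j; rewrite rhoZc.
Qed.

Lemma wealth_initial_capital (S xi : nat -> Omega -> R) xih (p0 : R) tau k w :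
  wealth S xi xih p0 tau k w = p0 + wealth S xi xih 0 tau k w.
Proof. by elim: k => [|k IH] /=; rewrite ?addr0 // IH addrA. Qed.

Context {dY : measure_display} {TY : measurableType dY} (K : nat)
  (G : nat -> set (set Omega)) (S : nat -> Omega -> R)
  (Y : nat -> Omega -> TY) (F : nat -> R -> TY -> R).

Lemma rho_writer_initial_capital rhow (p0 : R) tau :
  translation_invariant rhow ->
  rho_writer K G S Y F rhow p0 tau = (rho_writer K G S Y F rhow 0 tau - p0%:E)%E.
Proof.
move=> rhow_tr; rewrite -EFinN /rho_writer (ereal_inf_translate (admissible G)
  (fun xi xih w => payoff F S Y tau w - wealth S xi xih 0 tau K w)
  (fun xi xih w => payoff F S Y tau w - wealth S xi xih p0 tau K w)
  (- p0) rhow_tr) // => xi xih w.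
by rewrite wealth_initial_capital; ring.
Qed.

Lemma rho_buyer_initial_capital rhob (p0 : R) tau :
  translation_invariant rhob ->
  rho_buyer K G S Y F rhob p0 tau = (rho_buyer K G S Y F rhob 0 tau + p0%:E)%E.
Proof.
move=> rhob_tr; rewrite /rho_buyer (ereal_inf_translate (admissible G)
  (fun xi xih w => - payoff F S Y tau w - wealth S xi xih (- 0) tau K w)
  (fun xi xih w => - payoff F S Y tau w - wealth S xi xih (- p0) tau K w)
  p0 rhob_tr) // => xi xih w.
by rewrite wealth_initial_capital [in RHS]wealth_initial_capital; ring.
Qed.

Variables (rhow rhob : (Omega -> R) -> \bar R).
Hypotheses (rhow_tr : translation_invariant rhow)
  (rhob_tr : translation_invariant rhob).

Local Notation rw := (rho_writer K G S Y F rhow).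
Local Notation rb := (rho_buyer K G S Y F rhob).

Lemma ERP_commitment_withP p0 tau :
  ERP_commitment_with K G S Y F rhow rhob p0 tau <->
  [/\ stopping_time K G tau,
      forall tau', stopping_time K G tau' -> (rb 0 tau <= rb 0 tau')%E,
      rb 0 tau \is a fin_num, rw 0 tau \is a fin_num &
      p0 = (fine (rw 0 tau) - fine (rb 0 tau)) / 2].
Proof.
rewrite /ERP_commitment_with (rho_writer_initial_capital _ p0) //.
rewrite (rho_buyer_initial_capital _ p0 tau) //.
have minE tau' : (rb 0 tau + p0%:E <= rb p0 tau')%E = (rb 0 tau <= rb 0 tau')%E.
  by rewrite (rho_buyer_initial_capital _ p0) // leeD2rE.
split.
- move=> [st eq_wb fin_wp min_b].
  move: (fin_wp); rewrite fin_numD => /andP[fin_w _].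
  move: fin_wp; rewrite eq_wb fin_numD => /andP[fin_b _].
  split=> // [tau' st'|]; first by rewrite -minE min_b.
  by move: eq_wb; rewrite -(fineK fin_w) -(fineK fin_b) -!EFinD => -[]; lra.
- move=> [st min_b fin_b fin_w p0E]; split=> // [||tau' st'].
  + by rewrite p0E -(fineK fin_w) -(fineK fin_b) -!EFinD; congr EFin; field.
  + by rewrite fin_numD fin_w.
  + by rewrite minE min_b.
Qed.

End TranslationInvariance.

Theorem lemma3 (d : measure_display) (Omega : measurableType d) (R : realType)
  (dY : measure_display) (TY : measurableType dY)
  (K : nat) (G : nat -> set (set Omega))
  (S : nat -> Omega -> R) (Y : nat -> Omega -> TY) (F : nat -> R -> TY -> R)
  (rhow rhob : (Omega -> R) -> \bar R) :
  is_filtration K G -> adapted K G S -> adapted K G Y ->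
  convex_risk_measure rhow -> convex_risk_measure rhob ->
  ((exists p0 : R, exists tau, ERP_commitment_with K G S Y F rhow rhob p0 tau)
   <->
   (exists tau0, [/\ stopping_time K G tau0,
      (forall tau, stopping_time K G tau ->
         (rho_buyer K G S Y F rhob 0 tau0 <= rho_buyer K G S Y F rhob 0 tau)%E),
      (- rho_buyer K G S Y F rhob 0 tau0)%E \is a fin_num &
      rho_writer K G S Y F rhow 0 tau0 \is a fin_num]))
  /\
  (forall (p0 : R) tau, ERP_commitment_with K G S Y F rhow rhob p0 tau ->
     (forall tau', stopping_time K G tau' ->
        (rho_buyer K G S Y F rhob 0 tau <= rho_buyer K G S Y F rhob 0 tau')%E) /\
     p0 = (fine (rho_writer K G S Y F rhow 0 tau)
           - fine (rho_buyer K G S Y F rhob 0 tau)) / 2).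
Proof.
move=> _ _ _ /convex_risk_measure_translation_invariant rhow_tr
  /convex_risk_measure_translation_invariant rhob_tr.
have ERP_P := ERP_commitment_withP K G S Y F rhow rhob rhow_tr rhob_tr.
split; [split|].
- move=> [p0 [tau /ERP_P [st min_b fin_b fin_w _]]].
  by exists tau; split=> //; rewrite fin_numN; exact: fin_b.
- move=> [tau [st min_b fin_b fin_w]]; rewrite fin_numN in fin_b.
  by exists ((fine (rho_writer K G S Y F rhow 0 tau)
    - fine (rho_buyer K G S Y F rhob 0 tau)) / 2), tau; apply/ERP_P.
- by move=> p0 tau /ERP_P [].
Qed.
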